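(* For $n\ge2$, the DFA $\mathcal W_n$ defined below is minimal, accepts a two-sided ideal, and its transition semigroup has size $n^{n-2}+(n-2)2^{n-2}+1$.
   Context: $Q_n=\{0,\dots,n-1\}$. Notation: $(p\to q)$ maps $p$ to $q$ and fixes other states; $(p_0,\dots,p_{k-1})$ is the cyclic permutation $p_0\mapsto\cdots\mapsto p_{k-1}\mapsto p_0$ fixing other states; $\mathbf 1$ is the identity; $(1\to2)(0\to1)$ is the map $0\mapsto1,1\mapsto2,2\mapsto2$. For $n\ge4$, $\mathcal W_n$ has states $Q_n$, initial $0$, final $\{n-1\}$, alphabet $\{a,b,c,d,e,f\}$, where $a\colon(1,2,\dots,n-2)$, $b\colon(1,2)$, $c\colon(n-2\to1)$, $d\colon(n-2\to0)$, $e$ maps each state of $\{0,\dots,n-2\}$ to $1$ and fixes $n-1$, and $f\colon(1\to n-1)$ (for $n=4$, $a$ and $b$ coincide). $\mathcal W_3$ has states $Q_3$, initial $0$, final $\{2\}$, alphabet $\{a,b,c\}$, $a\colon(1\to2)(0\to1)$, $b\colon(1\to0)$, $c\colon\mathbf 1$. $\mathcal W_2$ has states $Q_2$, initial $0$, final $\{1\}$, alphabet $\{a,b\}$, $a\colon(0\to1)$, $b\colon\mathbf 1$. A two-sided ideal is a nonempty $L$ with $L=\Sigma^*L\Sigma^*$. The transition semigroup is the set of state transformations induced by nonempty words. *)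

From mathcomp Require Import all_boot.
From mathcomp Require Import boolp.
Set Implicit Arguments. Unset Strict Implicit. Unset Printing Implicit Defensive.

Record dfa (Sigma : Type) := DFA {
  dsize : nat;
  dtrans : 'I_dsize -> Sigma -> 'I_dsize;
  dinit : 'I_dsize;
  dfinal : {set 'I_dsize} }.
Arguments dsize {Sigma} d.
Arguments dtrans {Sigma} d _ _.
Arguments dinit {Sigma} d.
Arguments dfinal {Sigma} d.

Definition drun (Sigma : Type) (A : dfa Sigma) (q : 'I_(dsize A)) (w : seq Sigma)
  : 'I_(dsize A) := foldl (dtrans A) q w.

Definition accepts (Sigma : Type) (A : dfa Sigma) (w : seq Sigma) : bool :=
  @drun Sigma A (dinit A) w \in dfinal A.

Definition minimal (Sigma : Type) (A : dfa Sigma) : Prop :=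
  forall B : dfa Sigma, (forall w, accepts B w = accepts A w) -> dsize A <= dsize B.

Definition two_sided_ideal (Sigma : Type) (L : seq Sigma -> bool) : Prop :=
  (exists w, L w) /\
  forall w, L w <-> exists u x v, w = u ++ x ++ v /\ L x.

Definition trans_semigroup (Sigma : Type) (A : dfa Sigma)
  : {set {ffun 'I_(dsize A) -> 'I_(dsize A)}} :=
  [set f : {ffun 'I_(dsize A) -> 'I_(dsize A)} |
     `[< exists w : seq Sigma, w <> [::] /\ forall q, f q = @drun Sigma A q w >]].

Definition W_letters (n : nat) : nat :=
  if 4 <= n then 6 else if n == 3 then 3 else 2.

(* action of letter l on state x (as natural numbers).
   n >= 4: letters 0..5 are a,b,c,d,e,f;
   n = 3: letters 0..2 are a,b,c;  n = 2: letters 0..1 are a,b. *)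
Definition W_act (n l x : nat) : nat :=
  if 4 <= n then
    match l with
    | 0 => if (1 <= x) && (x <= n - 3) then x.+1
           else if x == n - 2 then 1 else x          (* a : (1,2,...,n-2) *)
    | 1 => if x == 1 then 2 else if x == 2 then 1 else x
    | 2 => if x == n - 2 then 1 else x
    | 3 => if x == n - 2 then 0 else x
    | 4 => if x <= n - 2 then 1 else x
    | _ => if x == 1 then n - 1 else x
    end
  else if n == 3 then
    match l with
    | 0 => if x == 0 then 1 else if x == 1 then 2 else x
    | 1 => if x == 1 then 0 else x
    | _ => x
    end
  else
    match l with
    | 0 => if x == 0 then 1 else x
    | _ => x
    end.

(* States are 'I_(n.-2.+2), which is 'I_n for n >= 2 (the only case used). *)
Definition W (n : nat) : dfa 'I_(W_letters n) :=
  @DFA 'I_(W_letters n) n.-2.+2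
    (fun q l => inord (W_act n l q))
    ord0
    [set ord_max].

From mathcomp Require Import all_boot zify boolp.
Set Implicit Arguments. Unset Strict Implicit. Unset Printing Implicit Defensive.

(* The sink n-1 is fixed by every letter, and each letter either fixes 0 or maps
   all states into {its image of 0, n-1}; this property is stable under
   composition, so every induced map t fixes n-1 and either fixes 0 or maps
   everything into {t 0, n-1}.  Conversely, a and b generate the permutations of
   {1, ..., n-2}; together with c, d and f they give every map fixing 0 and n-1,
   and every other admissible map factors through e.  Counting admissible maps
   by the value of t 0 gives n^(n-2) + (n-2) 2^(n-2) + 1.  The semigroup contains
   the maps "everything but n-1 to q" and "p to n-1", which make all states
   reachable and pairwise separated, and a word is accepted iff it sends every
   state to the absorbing state n-1, so the language is a two-sided ideal. *)

(* Split on the innermost conditionals of the goal, then try lia. *)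
Ltac lia_ifs := repeat (simpl; match goal with |- context [if ?b then _ else _] =>
  lazymatch b with context [if _ then _ else _] => fail | _ =>
  let H := fresh "H" in case: (boolP b) => H end end); simpl; try lia.

Lemma drun_cat (Sigma : Type) (A : dfa Sigma) (q : 'I_(dsize A)) u v :
  drun q (u ++ v) = drun (drun q u) v.
Proof. exact: foldl_cat. Qed.

Lemma drun_rcons (Sigma : Type) (A : dfa Sigma) (q : 'I_(dsize A)) u l :
  drun q (rcons u l) = dtrans A (drun q u) l.
Proof. by rewrite -cats1 drun_cat. Qed.

Section Automata.
Variables (Sigma : Type) (A : dfa Sigma).

Lemma trans_semigroup_word f :
  f \in trans_semigroup A -> exists w, forall q, f q = drun q w.
Proof. by rewrite inE => /asboolP [w [_ fw]]; exists w. Qed.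

Lemma minimal_of_reachable_separated :
  (forall q, exists w, drun (dinit A) w = q) ->
  (forall p q, p != q -> exists v, (drun p v \in dfinal A) != (drun q v \in dfinal A)) ->
  minimal A.
Proof.
move=> reach sep B eqL.
pose r q := projT1 (cid (reach q)).
pose g q := drun (dinit B) (r q).
suff /leq_card : injective g by rewrite !card_ord.
move=> p q gpq; apply/eqP/negPn/negP => /sep [v]; apply/negP/negPn/eqP.
have := congr1 (fun s => drun s v \in dfinal B) gpq.
rewrite /g /= -!drun_cat -![_ \in dfinal B]/(accepts B _) !eqL /accepts !drun_cat.
by rewrite (projT2 (cid (reach p))) (projT2 (cid (reach q))).
Qed.

Lemma two_sided_ideal_of_absorbing :
  (exists w, accepts A w) ->
  (forall q x, accepts A x -> drun q x \in dfinal A) ->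
  (forall q v, q \in dfinal A -> drun q v \in dfinal A) ->
  two_sided_ideal (accepts A).
Proof.
move=> nonempty from_any absorbing; split=> // x.
split=> [Lx|[u [y [v [-> Ly]]]]]; first by exists [::], x, [::]; rewrite cats0.
by rewrite /accepts !drun_cat; apply/absorbing/from_any.
Qed.

End Automata.

(* Maps on Q_(m.+2) are handled as functions on nat, of which only the values
   below m.+2 matter; 0 is the initial state and m.+1 the sink. *)
Definition admissible m (t : nat -> nat) : Prop :=
  [/\ forall x, x < m.+2 -> t x < m.+2, t m.+1 = m.+1 &
      t 0 = 0 \/ forall x, x < m.+2 -> t x = t 0 \/ t x = m.+1].

Section Admissible.
Variable m : nat.

Lemma admissible_ext t t' :
  (forall x, x < m.+2 -> t x = t' x) -> admissible m t -> admissible m t'.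
Proof.
move=> tt' [t_lt t_top t_kind]; split=> [x hx||]; first by rewrite -tt' ?t_lt.
  by rewrite -tt'.
by case: t_kind => [?|t_kind]; [left | right=> x hx]; rewrite -!tt' //; apply: t_kind.
Qed.

Lemma admissible_id : admissible m id.
Proof. by split=> //; left. Qed.

Lemma admissible_comp s t : admissible m s -> admissible m t -> admissible m (s \o t).
Proof.
case=> s_lt s_top s_kind [t_lt t_top t_kind]; split=> /= [x /t_lt/s_lt //||].
- by rewrite t_top.
case: t_kind => [t0|t_kind]; last first.
  by right=> x /t_kind [->|->]; [left|right].
rewrite t0; case: s_kind => [|s_kind]; [by left | by right=> x /t_lt/s_kind].
Qed.

Lemma admissible_act l : admissible m (W_act m.+2 l).
Proof.
rewrite /admissible /W_act; case: ifP => H4;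
  [case: l => [|[|[|[|[|l]]]]] | case: ifP => H3; [case: l => [|[|l]] | case: l => [|l]]];
  (split=> [x hx||]; [lia_ifs | lia_ifs | by [left; lia_ifs | right=> x hx; lia_ifs]]).
Qed.

Lemma act_lt l x : x < m.+2 -> W_act m.+2 l x < m.+2.
Proof. by case: (admissible_act l) => + _ _; apply. Qed.

End Admissible.

Definition induced m (t : nat -> nat) : Prop :=
  exists2 w : seq 'I_(W_letters m.+2), w != [::] &
    forall x, x < m.+2 -> t x = @drun _ (W m.+2) (inord x) w :> nat.

Section Induced.
Variable m : nat.
Local Notation run := (@drun _ (W m.+2)).

Lemma val_run_rcons (q : 'I_m.+2) w l :
  run q (rcons w l) = W_act m.+2 l (run q w) :> nat.
Proof. by rewrite drun_rcons /= inordK //; apply: act_lt. Qed.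

Lemma admissible_run w : admissible m (fun x => run (inord x) w : nat).
Proof.
elim/last_ind: w => [|w l IH].
  by apply: admissible_ext (admissible_id m) => x hx; rewrite /= inordK.
apply: admissible_ext (admissible_comp (admissible_act m l) IH) => x _.
by rewrite val_run_rcons.
Qed.

Lemma induced_admissible t : induced m t -> admissible m t.
Proof. by case=> w _ tw; apply: admissible_ext (admissible_run w) => x /tw. Qed.

Lemma induced_ext f g : induced m f -> (forall x, x < m.+2 -> f x = g x) -> induced m g.
Proof. by case=> w w0 fw fg; exists w => // x hx; rewrite -fg ?fw. Qed.

Lemma induced_comp f g : induced m f -> induced m g -> induced m (g \o f).
Proof.
case=> [u u0 fu] [v _ gv]; exists (u ++ v); first by case: u u0 {fu}.
by move=> x hx; rewrite drun_cat /= (fu x hx) gv // inord_val.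
Qed.

Lemma induced_iter f k : induced m f -> induced m (iter k.+1 f).
Proof. by move=> hf; elim: k => [|k IH] //; apply: induced_comp IH hf. Qed.

Lemma induced_act l : l < W_letters m.+2 -> induced m (W_act m.+2 l).
Proof.
by move=> hl; exists [:: Ordinal hl] => // x hx; rewrite /drun /= !inordK // act_lt.
Qed.

Lemma mem_trans_semigroup_induced (f : {ffun 'I_m.+2 -> 'I_m.+2}) :
  (f \in trans_semigroup (W m.+2)) <-> induced m (fun x => f (inord x) : nat).
Proof.
rewrite inE; split=> [/asboolP [w [w0 fw]]|[w w0 fw]].
  by exists w; [apply/eqP | move=> x _; rewrite fw].
apply/asboolP; exists w; split=> [|q]; first exact/eqP.
by apply: val_inj; rewrite /= -[q in LHS]inord_val fw // inord_val.
Qed.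

End Induced.

Lemma sub_count_lt (T : eqType) (a b : pred T) s : subpred b a ->
  (exists2 z, z \in s & a z && ~~ b z) -> count b s < count a s.
Proof.
move=> ba [z zs /andP[az bz]]; elim: s zs => // u s IH; rewrite inE /=.
case/orP=> [/eqP<-|/IH]; first by rewrite az (negPf bz) add1n ltnS sub_count.
by have := ba u; case: (b u) (a u) => [] [] //=; lia.
Qed.

Definition swap x y z : nat := if z == x then y else if z == y then x else z.
Definition send x y z : nat := if z == x then y else z.
Definition collapse m z : nat := if z <= m then 1 else z.

Lemma swapK x y : involutive (swap x y).
Proof. by move=> z; rewrite /swap; lia_ifs. Qed.

Section Generation.
Variables (m : nat) (G : (nat -> nat) -> Prop).
Hypothesis G_ext : forall f g, G f -> (forall x, x < m.+2 -> f x = g x) -> G g.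
Hypothesis G_comp : forall f g, G f -> G g -> G (g \o f).
Hypothesis G_id : G id.
Hypothesis G_send : forall x y, 1 <= x <= m -> y < m.+2 -> G (send x y).
Hypothesis G_swap : forall x y, 1 <= x <= m -> 1 <= y <= m -> G (swap x y).
Hypothesis G_collapse : G (collapse m).

Lemma G_fixing t :
  (forall x, x < m.+2 -> t x < m.+2) -> t 0 = 0 -> t m.+1 = m.+1 -> G t.
Proof.
have [k] := ubnP (count (fun x => t x != x) (iota 1 m)).
elim: k t => // k IH t moved t_lt t0 t_top.
have [/hasP[x]|fixed] := boolP (has (fun x => t x != x) (iota 1 m)); last first.
  apply: G_ext G_id _ => x hx /=; move/hasPn: fixed => /(_ x); rewrite mem_iota.
  have [->|[->|x_inner]] : x = 0 \/ x = m.+1 \/ 0 < x < 1 + m by lia.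
  - by rewrite t0.
  - by rewrite t_top.
  by move=> /(_ x_inner) /negPn /eqP.
rewrite mem_iota => hx tx; set y := t x.
have y_lt : y < m.+2 by apply: t_lt; lia.
have fewer t' z : (forall u, t' u != u -> t u != u) -> 1 <= z <= m -> t z != z ->
    t' z == z -> count (fun u => t' u != u) (iota 1 m) < k.
  move=> sub_moved hz tz t'z; rewrite -ltnS; apply: leq_trans moved; rewrite ltnS.
  by apply: sub_count_lt => //; exists z; rewrite ?mem_iota ?tz ?t'z //; lia.
(* If y = t x is fixed by t (or is 0 or the sink), t factors through send x y;
   otherwise it factors through swap x y, and y is fixed by the second factor. *)
have [y_fixed|[y_inner ty]] : (y = 0 \/ y = m.+1 \/ t y = y) \/ (1 <= y <= m /\ t y != y).
- by case: (t y =P y); [left; right; right | move/eqP; lia].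
- pose t' z := if z == x then x else t z.
  have G_t' : G t'.
    apply: IH; rewrite /t'.
    + apply: (fewer t' x) => [u||//|]; rewrite /t' ?eqxx //.
      by case: ifP => [/eqP->|]; rewrite ?eqxx.
    + by move=> z hz; case: ifP; [lia | move=> _; exact: t_lt].
    + by lia_ifs.
    + by lia_ifs.
  apply: G_ext (G_comp (G_send hx y_lt) G_t') _ => z _; rewrite /= /t' /send.
  case: (z =P x) => [->|/eqP/negPf->] //.
  case: eqP => [yx|_]; first by move: tx; rewrite -/y yx eqxx.
  by rewrite -/y; case: y_fixed => [e|[e|->]]; rewrite ?e ?t0 ?t_top.
- pose t' := t \o swap x y.
  have G_t' : G t'.
    apply: IH; rewrite /t' /swap /=.
    + apply: (fewer t' y) => [u||//|]; rewrite /t' /swap /= ?eqxx ?(negPf tx) //.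
      case: (u =P x) => [-> //|_]; case: (u =P y) => [->|//].
      by rewrite -/y eqxx.
    + by move=> z hz; apply: t_lt; lia_ifs.
    + by lia_ifs.
    + by lia_ifs.
  by apply: G_ext (G_comp (G_swap hx y_inner) G_t') _ => z _; rewrite /t' /= swapK.
Qed.

Lemma G_admissible t : admissible m t -> G t.
Proof.
case=> t_lt t_top t_kind; have [t0|t0] := eqVneq (t 0) 0; first exact: G_fixing.
case: t_kind => [/eqP|t_kind]; first by rewrite (negPf t0).
(* Send to the sink the points t sends there, collapse the others onto 1,
   then move 1 to t 0. *)
pose u z := if (1 <= z <= m) && (t z == m.+1) then m.+1 else z.
have G_u : G u by apply: G_fixing; rewrite /u => *; lia_ifs.
have t0_lt := t_lt 0 isT.
have G_s : G (send 1 (t 0)) by apply: G_fixing; rewrite /send => *; lia_ifs.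
apply: G_ext (G_comp (G_comp G_u G_collapse) G_s) _ => z hz.
have [->|[->|z_inner]] : z = 0 \/ z = m.+1 \/ 1 <= z <= m by lia.
- by rewrite /u /collapse /send /=; lia_ifs.
- by rewrite /u /collapse /send /= t_top; lia_ifs.
- by have := t_kind z hz; rewrite /u /collapse /send /=; lia_ifs.
Qed.

End Generation.

Definition rotate m z : nat := if (1 <= z) && (z < m) then z.+1 else if z == m then 1 else z.

Lemma iter_rotate m k z : k <= m -> z < m.+2 ->
  iter k (rotate m) z = if 1 <= z <= m then (if z + k <= m then z + k else z + k - m) else z.
Proof.
elim: k => [|k IH] hk hz; first by lia_ifs.
by rewrite iterS IH 1?(ltnW hk) // /rotate; lia_ifs.
Qed.

Lemma swap_send a b x y z :
  swap a b (send x y (swap a b z)) = send (swap a b x) (swap a b y) z.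
Proof. by rewrite /swap /send; lia_ifs. Qed.

Section LargeAutomata.
Variables (m : nat) (hm : 2 <= m).
Local Notation induced := (induced m).

Lemma induced_letter l t : l < 6 ->
  (forall z, z < m.+2 -> W_act m.+2 l z = t z) -> induced t.
Proof. by move=> hl; apply/induced_ext/induced_act; rewrite /W_letters; lia_ifs. Qed.

Lemma induced_rotate : induced (rotate m).
Proof. by apply: (@induced_letter 0) => // z _; rewrite /W_act /rotate; lia_ifs. Qed.

Lemma induced_swap12 : induced (swap 1 2).
Proof. by apply: (@induced_letter 1) => // z _; rewrite /W_act /swap; lia_ifs. Qed.

Lemma induced_send_last_1 : induced (send m 1).
Proof. by apply: (@induced_letter 2) => // z _; rewrite /W_act /send; lia_ifs. Qed.

Lemma induced_send_last_0 : induced (send m 0).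
Proof. by apply: (@induced_letter 3) => // z _; rewrite /W_act /send; lia_ifs. Qed.

Lemma induced_collapse : induced (collapse m).
Proof. by apply: (@induced_letter 4) => // z _; rewrite /W_act /collapse; lia_ifs. Qed.

Lemma induced_send_1_sink : induced (send 1 m.+1).
Proof. by apply: (@induced_letter 5) => // z _; rewrite /W_act /send; lia_ifs. Qed.

Lemma induced_id : induced id.
Proof.
by apply: induced_ext (induced_comp induced_swap12 induced_swap12) _ => z _; rewrite /= swapK.
Qed.

Lemma induced_swap_succ i : 1 <= i < m -> induced (swap i i.+1).
Proof.
elim: i => [//|i IH] hi; have [->|i_pos] := posnP i; first exact: induced_swap12.
have rotate_inv : induced (iter m.-1 (rotate m)). (* rotate m has order m *)
  by rewrite (_ : m.-1 = m.-2.+1); [exact: induced_iter induced_rotate | lia].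
have swap_i : induced (swap i i.+1) by apply: IH; lia.
apply: induced_ext (induced_comp (induced_comp rotate_inv swap_i) induced_rotate) _ => z hz /=.
by rewrite iter_rotate; [rewrite /rotate /swap; lia_ifs | lia | lia].
Qed.

Lemma induced_swap x y : 1 <= x <= m -> 1 <= y <= m -> induced (swap x y).
Proof.
wlog le_xy : x y / x <= y.
  move=> key hx hy; case: (leqP x y) => [|/ltnW] le; first exact: key.
  by apply: induced_ext (key y x le hy hx) _ => z _; rewrite /swap; lia_ifs.
elim: y le_xy => [|y IH] le hx hy; first lia.
have [lt||<-] := ltngtP x y.+1; last 2 first.
- lia.
- by apply: induced_ext induced_id _ => z _; rewrite /swap; lia_ifs.
have swap_y : induced (swap y y.+1) by apply: induced_swap_succ; lia.
case: (eqVneq x y) => [->|ne]; first exact: swap_y.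
have swap_xy : induced (swap x y) by apply: IH; lia.
apply: induced_ext (induced_comp (induced_comp swap_y swap_xy) swap_y) _ => z _ /=.
by rewrite /swap; lia_ifs.
Qed.

Lemma induced_send_conj a b x y x' y' : induced (send x y) ->
  1 <= a <= m -> 1 <= b <= m -> swap a b x = x' -> swap a b y = y' -> induced (send x' y').
Proof.
move=> hs ha hb <- <-; have sw := induced_swap ha hb.
by apply: induced_ext (induced_comp (induced_comp sw hs) sw) _ => z _; rewrite /= swap_send.
Qed.

Lemma induced_send x y : 1 <= x <= m -> y < m.+2 -> induced (send x y).
Proof.
move=> hx hy; have [->|yx] := eqVneq y x.
  by apply: induced_ext induced_id _ => z _; rewrite /send; lia_ifs.
have [->|y0] := eqVneq y 0.
  by apply: (induced_send_conj (a:=m) (b:=x) induced_send_last_0); rewrite /swap; lia_ifs.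
have [->|y_sink] := eqVneq y m.+1.
  by apply: (induced_send_conj (a:=1) (b:=x) induced_send_1_sink); rewrite /swap; lia_ifs.
have [x1|x1] := eqVneq x 1.
  subst x.
  have send_1_last : induced (send 1 m).
    by apply: (induced_send_conj (a:=1) (b:=m) induced_send_last_1); rewrite /swap; lia_ifs.
  by apply: (induced_send_conj (a:=m) (b:=y) send_1_last); rewrite /swap; lia_ifs.
have send_x_1 : induced (send x 1).
  by apply: (induced_send_conj (a:=m) (b:=x) induced_send_last_1); rewrite /swap; lia_ifs.
by apply: (induced_send_conj (a:=1) (b:=y) send_x_1); rewrite /swap; lia_ifs.
Qed.

Lemma induced_of_admissible_large t : admissible m t -> induced t.
Proof.
apply: G_admissible; [exact: induced_ext | exact: induced_comp | exact: induced_id |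
  exact: induced_send | exact: induced_swap | exact: induced_collapse].
Qed.

End LargeAutomata.

Lemma induced_of_admissible_W3 t : admissible 1 t -> induced 1 t.
Proof.
have act l : l < 3 -> induced 1 (W_act 3 l) by move=> hl; apply: induced_act.
have G_id : induced 1 id by apply: induced_ext (act 2 isT) _ => z _; rewrite /W_act; lia_ifs.
apply: G_admissible => //; [exact: induced_ext | exact: induced_comp | | |].
- move=> x y hx hy; have -> : x = 1 by lia.
  case: y hy => [|[|[|//]]] _.
  + by apply: induced_ext (act 1 isT) _ => z _; rewrite /W_act /send; lia_ifs.
  + by apply: induced_ext G_id _ => z _; rewrite /send; lia_ifs.
  + apply: induced_ext (induced_comp (act 0 isT) (act 1 isT)) _ => z _.
    by rewrite /W_act /send; lia_ifs.
- by move=> x y hx hy; apply: induced_ext G_id _ => z _; rewrite /swap; lia_ifs.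
- apply: induced_ext (induced_comp (act 1 isT) (act 0 isT)) _ => z _.
  by rewrite /W_act /collapse; lia_ifs.
Qed.

Lemma induced_of_admissible_W2 t : admissible 0 t -> induced 0 t.
Proof.
have act l : l < 2 -> induced 0 (W_act 2 l) by move=> hl; apply: induced_act.
apply: G_admissible; [exact: induced_ext | exact: induced_comp | | lia | lia |].
- by apply: induced_ext (act 1 isT) _ => z _; rewrite /W_act; lia_ifs.
- by apply: induced_ext (act 0 isT) _ => z _; rewrite /W_act /collapse; lia_ifs.
Qed.

Lemma induced_of_admissible m t : admissible m t -> induced m t.
Proof.
case: m => [|[|m]]; [exact: induced_of_admissible_W2 | exact: induced_of_admissible_W3 |].
exact: induced_of_admissible_large.
Qed.

Definition allowed m (p x : 'I_m.+2) : {set 'I_m.+2} :=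
  if x == ord0 then [set p] else if x == ord_max then [set ord_max]
  else if p == ord0 then setT else [set p; ord_max].

Section TransitionSemigroup.
Variable m : nat.
Implicit Types (f : {ffun 'I_m.+2 -> 'I_m.+2}) (p q : 'I_m.+2).

Lemma inord_ord0 : inord 0 = ord0 :> 'I_m.+2.
Proof. by apply: val_inj; rewrite /= inordK. Qed.

Lemma inord_ord_max : inord m.+1 = ord_max :> 'I_m.+2.
Proof. by apply: val_inj; rewrite /= inordK. Qed.

Lemma admissible_allowed f :
  admissible m (fun x => f (inord x) : nat) <-> f \in family (allowed (f ord0)).
Proof.
rewrite /admissible inord_ord0 inord_ord_max; split.
  case=> _ f_top f_kind; apply/familyP => q; rewrite /allowed.
  have [->|q0] := eqVneq q ord0; first exact: set11.
  have [->|q_max] := eqVneq q ord_max; first by rewrite inE; apply/eqP/val_inj; exact: f_top.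
  case: ifP => [_|/negbT f0]; first by rewrite inE.
  case: f_kind => [e|/(_ q (ltn_ord q))]; first by case/negP: f0; apply/eqP/val_inj.
  by rewrite inord_val !inE -!(inj_eq val_inj) /= => -[->|->]; rewrite eqxx ?orbT.
move/familyP=> f_allowed; split=> [x _|//|]; first exact: ltn_ord.
- by have := f_allowed ord_max; rewrite /allowed /= eqxx inE => /eqP->.
have [f0|f0] := eqVneq (f ord0) ord0; [by left; rewrite f0 | right=> x hx].
have := f_allowed (inord x); rewrite /allowed (negPf f0).
case: ifP => [/eqP-> _|_]; first by left.
case: ifP => [/eqP-> /set1P->|_]; first by right.
by rewrite !inE => /orP[] /eqP->; [left | right].
Qed.

Lemma mem_trans_semigroup_W f :
  (f \in trans_semigroup (W m.+2)) = (f \in family (allowed (f ord0))).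
Proof.
apply/idP/idP=> [/mem_trans_semigroup_induced/induced_admissible/admissible_allowed //|].
by move/admissible_allowed/induced_of_admissible/mem_trans_semigroup_induced.
Qed.

Lemma max_neq0 : (ord_max == ord0 :> 'I_m.+2) = false.
Proof. by rewrite -val_eqE. Qed.

Lemma ord0_neq_max : (ord0 == ord_max :> 'I_m.+2) = false.
Proof. by rewrite -val_eqE. Qed.

Definition inner (i : 'I_m) : 'I_m.+2 := lift ord0 (widen_ord (leqnSn m) i).

Lemma inner_neq0 i : (inner i == ord0) = false.
Proof. by rewrite -val_eqE. Qed.

Lemma inner_neq_max i : (inner i == ord_max) = false.
Proof. by rewrite -val_eqE /= /bump /=; have := ltn_ord i; lia. Qed.

Lemma big_ord_inner (R : Type) (idx : R) (op : Monoid.law idx) (F : 'I_m.+2 -> R) :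
  \big[op/idx]_(x < m.+2) F x = op (F ord0) (op (\big[op/idx]_(i < m) F (inner i)) (F ord_max)).
Proof. by rewrite big_ord_recl big_ord_recr; congr (op _ (op _ (F _))); exact: val_inj. Qed.

Lemma card_allowed_inner p i :
  #|allowed p (inner i)| = if p == ord0 then m.+2 else (p != ord_max).+1.
Proof.
rewrite /allowed inner_neq0 inner_neq_max.
by case: ifP => _; [rewrite cardsT card_ord | rewrite cards2].
Qed.

Lemma card_family_allowed p :
  #|family (allowed p)| = (if p == ord0 then m.+2 else (p != ord_max).+1) ^ m.
Proof.
rewrite card_family foldrE big_map big_enum /= big_ord_inner /=.
rewrite (eq_bigr _ (fun i _ => card_allowed_inner p i)) prod_nat_const card_ord.
by rewrite /allowed eqxx max_neq0 eqxx !cards1 mul1n muln1.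
Qed.

Lemma card_trans_semigroup_W :
  #|trans_semigroup (W m.+2)| = m.+2 ^ m + m * 2 ^ m + 1.
Proof.
rewrite -sum1_card (partition_big (fun f => f ord0) predT) //=.
have fibre p : \sum_(f in trans_semigroup (W m.+2) | f ord0 == p) 1 = #|family (allowed p)|.
  rewrite sum1_card; apply: eq_card => f; rewrite -topredE /= mem_trans_semigroup_W.
  apply/andP/familyP => [[/familyP f_allowed /eqP <-] // | f_allowed].
  have := f_allowed ord0; rewrite /allowed eqxx => /set1P f0.
  by split; [apply/familyP; rewrite f0 | rewrite f0].
rewrite (eq_bigr _ (fun p _ => fibre p)) big_ord_inner /= !card_family_allowed eqxx.
rewrite (eq_bigr (fun _ => 2 ^ m)) => [|i _]; last by rewrite card_family_allowed inner_neq0 inner_neq_max.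
by rewrite sum_nat_const card_ord max_neq0 eqxx exp1n addnA.
Qed.

Local Notation run := (@drun _ (W m.+2)).

Lemma run_of_family f : f \in family (allowed (f ord0)) -> exists w, forall q, f q = run q w.
Proof. by rewrite -mem_trans_semigroup_W; apply: trans_semigroup_word. Qed.

Lemma reachable_W q : exists w, run ord0 w = q.
Proof.
pose f : {ffun 'I_m.+2 -> 'I_m.+2} := [ffun x => if x == ord_max then ord_max else q].
have [|w fw] := @run_of_family f; last by exists w; rewrite -fw ffunE ord0_neq_max.
apply/familyP => x; rewrite /allowed !ffunE ord0_neq_max.
case: (x =P ord0) => [->|_]; first by rewrite ord0_neq_max set11.
by case: ifP => _; [rewrite set11 | case: ifP; rewrite !inE ?eqxx].
Qed.

Lemma run_sink v : run ord_max v = ord_max.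
Proof.
by case: (@admissible_run m v) => _ top _; apply: val_inj; rewrite -[in LHS]inord_ord_max; exact: top.
Qed.

Lemma run_accepted q x : run ord0 x = ord_max -> run q x = ord_max.
Proof.
case: (@admissible_run m x) => _ _; rewrite inord_ord0 => -[|/(_ q (ltn_ord q))].
  by move=> e /(congr1 val) /=; rewrite e.
by rewrite inord_val => -[] e /(congr1 val) /= e0; apply: val_inj; rewrite /= e ?e0.
Qed.

Lemma separated_W p q : p != q ->
  exists v, (run p v \in [set ord_max]) != (run q v \in [set ord_max]).
Proof.
wlog p0 : p q / p != ord0.
  move=> key pq; have [p0|p0] := eqVneq p ord0; last exact: key.
  have q0 : q != ord0 by rewrite -p0 eq_sym.
  have qp : q != p by rewrite eq_sym.
  by have [v sep] := key q p q0 qp; exists v; rewrite eq_sym.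
move=> pq; have [sink|] := boolP ((p == ord_max) || (q == ord_max)).
  exists [::]; rewrite /drun /= !inE.
  by case/orP: sink pq => /eqP->; rewrite eqxx // eq_sym => /negPf->.
rewrite negb_or => /andP[p_max q_max].
pose f : {ffun 'I_m.+2 -> 'I_m.+2} := [ffun x => if x == p then ord_max else x].
have [|v fv] := @run_of_family f.
  apply/familyP => x; rewrite /allowed !ffunE (eq_sym ord0) (negPf p0) eqxx.
  case: (x =P ord0) => [->|_]; first by rewrite eq_sym (negPf p0) set11.
  by case: ifP => [/eqP->|_]; [rewrite (negPf p_max) | case: ifP]; rewrite inE.
by exists v; rewrite -!fv !ffunE eqxx (eq_sym q) (negPf pq) !inE eqxx (negPf q_max).
Qed.

End TransitionSemigroup.

Theorem lemma6 (n : nat) (hn : 2 <= n) :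
  minimal (W n) /\
  two_sided_ideal (accepts (W n)) /\
  #|trans_semigroup (W n)| = n ^ (n - 2) + (n - 2) * 2 ^ (n - 2) + 1.
Proof.
case: n hn => [|[|m]] // _; rewrite !subSS subn0 -card_trans_semigroup_W.
split; first by apply: minimal_of_reachable_separated; [exact: reachable_W | exact: separated_W].
split=> //; apply: two_sided_ideal_of_absorbing.
- have [w] := reachable_W (ord_max : 'I_m.+2); exists w; rewrite /accepts inE; exact/eqP.
- by move=> q x; rewrite /accepts !inE => /eqP /run_accepted ->.
- by move=> q v; rewrite !inE => /eqP->; rewrite run_sink.
Qed.
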